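(* Let $X^{2n}$ be a quasitoric manifold over a simple polytope $P^n$ and let $T^{n-1}\subset T^n$ be a subtorus such that the induced action of $T^{n-1}$ on $X^{2n}$ has connected stabilizers. Then the orbit space $Q^{n+1}=X^{2n}/T^{n-1}$ is homeomorphic to $(P^n\times S^1)/\sim$, where $(x,s_1)\sim(x,s_2)$ whenever $x\in Y_{\mathrm{non}}$.
   Context: For each facet $F$ of $P^n$, $\lambda(F)\in N=\mathrm{Hom}(T^1,T^n)\cong\mathbb{Z}^n$ is the primitive vector of the circle subgroup of $T^n$ stabilizing points of $X^{2n}$ over the interior of $F$. Let $\Pi\subset N$ be the image of $\mathrm{Hom}(T^1,T^{n-1})$. A facet $F$ is special if $\lambda(F)\in\Pi$; a proper face of $P^n$ is special if all facets containing it are special, and non-special otherwise. $Y_{\mathrm{non}}\subset\partial P^n$ is the union of all (closed) non-special faces. *)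

From HB Require Import structures.
From mathcomp Require Import all_boot all_order all_algebra.
From mathcomp Require Import all_classical all_reals all_analysis.
Set Implicit Arguments. Unset Strict Implicit. Unset Printing Implicit Defensive.
Import Order.TTheory GRing.Theory Num.Theory.
Import numFieldNormedType.Exports.
Local Open Scope classical_set_scope.
Local Open Scope ring_scope.

Definition eqcl {T : Type} (E : T -> T -> Prop) (x : T) : set T :=
  [set y | E x y].
Definition quot (T : topologicalType) (E : T -> T -> Prop) : Type :=
  {A : set T | exists x, A = eqcl E x}.
Definition qpi {T : topologicalType} (E : T -> T -> Prop) (x : T) : quot E :=
  exist _ (eqcl E x) (ex_intro _ x erefl).
HB.instance Definition _ (T : topologicalType) (E : T -> T -> Prop) :=
  gen_eqMixin (quot E).
HB.instance Definition _ (T : topologicalType) (E : T -> T -> Prop) :=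
  gen_choiceMixin (quot E).
Section QuotTop.
Context {T : topologicalType} (E : T -> T -> Prop).
Definition quot_open (U : set (quot E)) := open (qpi E @^-1` U).
Program Definition quot_top_mixin :=
  @isOpenTopological.Build (quot E) quot_open _ _ _.
Next Obligation. by rewrite /quot_open preimage_setT; exact: openT. Qed.
Next Obligation. by move=> ? ? ? ?; exact: openI. Qed.
Next Obligation. by move=> I f ofi; apply: bigcup_open => i _; exact: ofi. Qed.
End QuotTop.
HB.instance Definition _ (T : topologicalType) (E : T -> T -> Prop) :=
  quot_top_mixin E.

Definition homeomorphic (X Y : topologicalType) : Prop :=
  exists (f : X -> Y) (g : Y -> X),
    [/\ continuous f, continuous g, cancel f g & cancel g f].

(* Simple polytopes P = {x in R^n | <a_i, x> <= b_i, i < m}, with the *)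
(* m inequalities irredundant, so that facet i is the i-th facet.     *)
Section Polytope.
Variables (R : realType) (n m : nat).
Variables (a : 'I_m -> 'rV[R]_n) (b : 'I_m -> R).

Definition dotv (u v : 'rV[R]_n) : R := \sum_(j < n) u 0 j * v 0 j.

Definition polyP : set 'rV[R]_n := [set x | forall i, dotv (a i) x <= b i].

Definition facet (i : 'I_m) : set 'rV[R]_n :=
  [set x | polyP x /\ dotv (a i) x = b i].

(* faces: nonempty intersections of P with supporting hyperplanes
   (P itself is the improper face, c = 0, d = 0) *)
Definition is_face (G : set 'rV[R]_n) : Prop :=
  G !=set0 /\
  exists (c : 'rV[R]_n) (d : R),
    (forall x, polyP x -> dotv c x <= d) /\
    G = [set x | polyP x /\ dotv c x = d].

Definition is_vertex (v : 'rV[R]_n) : Prop := is_face [set v].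

Definition simple_polytope : Prop :=
  [/\
      exists M : R, forall x, polyP x -> forall j, `|x 0 j| <= M,
      exists x, forall i, dotv (a i) x < b i,
      (* irredundant: each inequality cuts out its own facet *)
      forall i, exists x, polyP x /\ (forall k, dotv (a k) x = b k <-> k = i)
    &
      forall v, is_vertex v -> #|[set i | v \in facet i]| = n ].

Definition vR (z : 'rV[int]_n) : 'rV[R]_n := map_mx (fun k : int => k%:~R) z.

Definition char_fun (lam : 'I_m -> 'rV[int]_n) : Prop :=
  forall v, is_vertex v ->
    exists (M : 'M[int]_n) (f : 'I_n -> 'I_m),
      [/\ \det M \is a GRing.unit, injective f,
          forall k, row k M = lam (f k),
          forall k, v \in facet (f k)
        & forall i, v \in facet i -> exists k, f k = i].

Definition latticeZ : set 'rV[R]_n := [set v | exists z, v = vR z].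
Definition torusE (s t : 'rV[R]_n) : Prop := latticeZ (s - t).
Definition torus := @quot 'rV[R]_n torusE.
Definition tpi (s : 'rV[R]_n) : torus := qpi torusE s.

(* Lie algebra of the subtorus T(F(x)) generated by the circles lambda(F_i),
   F_i ranging over the facets containing x *)
Definition spanF (lam : 'I_m -> 'rV[int]_n) (x : 'rV[R]_n) : set 'rV[R]_n :=
  [set v | exists c : 'I_m -> R,
           v = \sum_(i < m | x \in facet i) c i *: vR (lam i)].

(* The quasitoric manifold X = P x T^n / ~ (Davis-Januszkiewicz model):
   (x,t) ~ (x',t') iff x = x' and t - t' lies in the subtorus T(F(x)). *)
Definition PT := (set_type polyP * torus)%type.
Definition relX (lam : 'I_m -> 'rV[int]_n) (p q : PT) : Prop :=
  set_val p.1 = set_val q.1 /\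
  exists s t, [/\ tpi s = p.2, tpi t = q.2 & spanF lam (set_val p.1) (s - t)].
Definition qtmanifold (lam : 'I_m -> 'rV[int]_n) := @quot PT (relX lam).
Definition xpi (lam : 'I_m -> 'rV[int]_n) (x : set_type polyP) (s : 'rV[R]_n)
  : qtmanifold lam := qpi (relX lam) (x, tpi s).

(* A subtorus T^{n-1} of T^n: it is the image of R^{n-1} -> R^n -> T^n,
   c |-> c *m B, for an integer matrix B of rank n-1; as a group,
   T^{n-1} = R^{n-1} / {c | c *m B in Z^n}. *)
Definition intmx (k l : nat) (B : 'M[int]_(k, l)) : 'M[R]_(k, l) :=
  map_mx (fun z : int => z%:~R) B.
Definition subtorusE (B : 'M[int]_(n.-1, n)) (c d : 'rV[R]_(n.-1)) : Prop :=
  latticeZ ((c - d) *m intmx B).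
Definition subtorus (B : 'M[int]_(n.-1, n)) := @quot 'rV[R]_(n.-1) (subtorusE B).
Definition spi (B : 'M[int]_(n.-1, n)) (c : 'rV[R]_(n.-1)) : subtorus B :=
  qpi (subtorusE B) c.

(* the (restricted) action of T^{n-1} on X: [x, t] . [c] = [x, t + cB] *)
Definition stabilizer (lam : 'I_m -> 'rV[int]_n) (B : 'M[int]_(n.-1, n))
  (p : qtmanifold lam) : set (subtorus B) :=
  [set g | exists c x s,
     [/\ g = spi B c, p = xpi lam x s & p = xpi lam x (s + c *m intmx B)]].

Definition connected_stabilizers (lam : 'I_m -> 'rV[int]_n)
  (B : 'M[int]_(n.-1, n)) : Prop :=
  forall p : qtmanifold lam, connected (@stabilizer lam B p).

Definition orbitE (lam : 'I_m -> 'rV[int]_n) (B : 'M[int]_(n.-1, n))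
  (p q : qtmanifold lam) : Prop :=
  exists c x s, p = xpi lam x s /\ q = xpi lam x (s + c *m intmx B).
Definition orbit_space (lam : 'I_m -> 'rV[int]_n) (B : 'M[int]_(n.-1, n)) :=
  @quot (qtmanifold lam) (@orbitE lam B).

Definition special_facet (lam : 'I_m -> 'rV[int]_n) (B : 'M[int]_(n.-1, n))
  (i : 'I_m) : Prop :=
  (* lambda(F_i) lies in Pi = integer points of the real span of the rows of B,
     i.e. the image of Hom(T^1, T^{n-1}) in N = Z^n *)
  exists y : 'rV[R]_(n.-1), vR (lam i) = y *m intmx B.

Definition special_face (lam : 'I_m -> 'rV[int]_n) (B : 'M[int]_(n.-1, n))
  (G : set 'rV[R]_n) : Prop :=
  forall i, G `<=` facet i -> special_facet lam B i.

Definition Ynon (lam : 'I_m -> 'rV[int]_n) (B : 'M[int]_(n.-1, n)) :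
  set 'rV[R]_n :=
  [set x | exists G, [/\ is_face G, G <> polyP, ~ special_face lam B G & G x]].

Definition circle : set (R * R)%type := [set v | v.1 ^+ 2 + v.2 ^+ 2 = 1].
Definition PS := (set_type polyP * set_type circle)%type.
Definition relY (lam : 'I_m -> 'rV[int]_n) (B : 'M[int]_(n.-1, n))
  (p q : PS) : Prop :=
  set_val p.1 = set_val q.1 /\ (p.2 = q.2 \/ Ynon lam B (set_val p.1)).
Definition pinched (lam : 'I_m -> 'rV[int]_n) (B : 'M[int]_(n.-1, n)) :=
  @quot PS (relY lam B).

End Polytope.

(* Via the Smith normal form of B choose an integral column c with B c = 0 and
   an integral row v with v c = 1.  The linear form kappa u = u c vanishes
   exactly on the Lie algebra of T^{n-1} (B has rank n - 1), is integral on
   Z^n and takes the value 1 at v, so [x, t] |-> (x, e^{2 pi i kappa t}) is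
   well defined on X / T^{n-1}.  Over a point x all of whose facets are
   special, kappa kills the isotropy torus T(F(x)) and the circle survives;
   over x in Y_non some facet circle lambda(F) with kappa (lambda F) <> 0
   fixes x, so the whole fibre is a single orbit.  The inverse sends
   (x, e^{2 pi i theta}) to [x, theta v]; it is continuous because the angle
   has continuous local branches. *)

From Pilot Require Import Defs.
From HB Require Import structures.
From mathcomp Require Import all_boot all_order all_algebra.
From mathcomp Require Import all_classical all_reals all_analysis.
From mathcomp Require Import ring lra.
From Stdlib Require Import RelationClasses.
Import Order.TTheory GRing.Theory Num.Theory.
Import numFieldNormedType.Exports.
Local Open Scope classical_set_scope.
Local Open Scope ring_scope.

Section Quotient.
Context {T : topologicalType} {E : T -> T -> Prop}.

Lemma qpi_surj (q : quot E) : exists x, q = qpi E x.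
Proof.
case: q => A [x defA]; exists x; rewrite /qpi; move: (ex_intro _ _ _) => p.
by subst A; congr exist; exact: Prop_irrelevance.
Qed.

Lemma qpi_continuous : continuous (qpi E).
Proof. by apply/continuousP => U oU; exact: oU. Qed.

Hypothesis E_equiv : Equivalence E.

Lemma qpiP x y : qpi E x = qpi E y <-> E x y.
Proof.
case: E_equiv => Erefl Esym Etrans.
split=> [/(congr1 sval) /= eqxy | Exy].
  by have Eyy : eqcl E y y := Erefl y; rewrite -eqxy in Eyy.
rewrite /qpi; move: (ex_intro _ _ _) (ex_intro _ _ _).
have -> : eqcl E x = eqcl E y.
  by apply/seteqP; split=> z; [exact: Etrans (Esym _ _ Exy) | exact: Etrans].
by move=> p1 p2; congr exist; exact: Prop_irrelevance.
Qed.

Definition qrep (q : quot E) : T := sval (cid (svalP q)).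

Lemma qrepP x : E x (qrep (qpi E x)).
Proof.
rewrite /qrep; case: (cid _) => y /= eq_cl.
case: E_equiv => Erefl _ _.
by have Eyy : eqcl E y y := Erefl y; rewrite -eq_cl in Eyy.
Qed.

Section Lift.
Context {Y : topologicalType} (f : T -> Y).
Hypothesis f_compat : forall x y, E x y -> f x = f y.

Definition qlift (q : quot E) : Y := f (qrep q).

Lemma qliftE x : qlift (qpi E x) = f x.
Proof. by rewrite /qlift -(f_compat _ _ (qrepP x)). Qed.

Lemma qlift_continuous : continuous f -> continuous qlift.
Proof.
move=> /continuousP f_cont; apply/continuousP => U oU.
rewrite /open /= /quot_open.
have -> : qpi E @^-1` (qlift @^-1` U) = f @^-1` U.
  by apply/seteqP; split=> x /=; rewrite qliftE.
exact: f_cont.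
Qed.

End Lift.
End Quotient.

Arguments qliftE {T E} E_equiv {Y f} f_compat x.
Arguments qlift_continuous {T E} E_equiv {Y f} f_compat.

Lemma fst_continuous {U V : topologicalType} : continuous (@fst U V).
Proof. by move=> [x y]; exact: (@cvg_fst _ _ (nbhs x) (nbhs y) _). Qed.

Lemma snd_continuous {U V : topologicalType} : continuous (@snd U V).
Proof. by move=> [x y]; exact: (@cvg_snd _ _ (nbhs x) (nbhs y) _). Qed.

Lemma continuous_pair_map {U V W : topologicalType} {g : V -> W} :
  continuous g -> continuous (fun p : U * V => (p.1, g p.2)).
Proof.
move=> g_cont [x y]; apply: cvg_pair; first exact: cvg_fst.
apply: (@continuous_comp _ _ _ snd g (x, y)); last exact: g_cont.
exact: snd_continuous.
Qed.

Section Circle.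
Context {R : realType}.

Lemma periodicz (f : R -> R) (T : R) :
  periodic f T -> forall (k : int) x, f (x + k%:~R * T) = f x.
Proof.
move=> fT [] j x; rewrite mulrzl; first exact: periodicn.
by rewrite NegzE mulrNz -[in RHS](subrK (T *+ j.+1) x) periodicn.
Qed.

Lemma cos_eq1 (d : R) : cos d = 1 -> exists k : int, d = k%:~R * (pi *+ 2).
Proof.
move=> cosd; set tau := pi *+ 2.
have tau_gt0 : 0 < tau by rewrite mulrn_wgt0 // pi_gt0.
pose k := Num.floor (d / tau); exists k.
pose r := d - k%:~R * tau.
have cosr : cos r = 1 by rewrite /r -mulNr -intrN periodicz //; exact: cosD2pi.
have /andP[r_ge0 r_lt] : 0 <= r < tau.
  have /andP[fl_le fl_gt] := floor_itv (d / tau).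
  rewrite subr_ge0 ltrBlDl -ler_pdivlMr // fl_le /=.
  have d_tau : d = d / tau * tau by rewrite divfK // gt_eqF.
  rewrite intrD in fl_gt; rewrite [X in X < _]d_tau; nra.
suff r0 : r = 0 by move/eqP: r0; rewrite subr_eq0 => /eqP.
have [r_le_pi | pi_lt_r] := leP r pi.
  apply: (@cos_inj R); rewrite ?cos0 // !in_itv /= ?lexx ?pi_ge0 //=.
  by rewrite r_ge0.
have tau_r : cos (tau - r) = cos 0 by rewrite cos0 addrC cosD2pi cosN.
have tau_r_itv : 0 <= tau - r <= pi.
  by move: r_lt; rewrite /tau mulr2n => ?; apply/andP; split; lra.
have := @cos_inj R (tau - r) 0; rewrite !in_itv /= lexx pi_ge0 tau_r_itv.
by move=> /(_ isT isT tau_r); lra.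
Qed.

Definition circle_exp (t : R) : set_type (@circle R) :=
  exist _ (cos (t * (pi *+ 2)), sin (t * (pi *+ 2))) (mem_set (cos2Dsin2 _)).

Lemma tau_neq0 : pi *+ 2 != 0 :> R.
Proof. by rewrite mulrn_eq0 /= gt_eqF // pi_gt0. Qed.

Lemma circle_expDz t (k : int) : circle_exp (t + k%:~R) = circle_exp t.
Proof.
apply: val_inj; rewrite /= mulrDl !periodicz //.
  exact: sinD2pi.
exact: cosD2pi.
Qed.

Lemma circle_exp_inj s t :
  circle_exp s = circle_exp t -> exists k : int, s - t = k%:~R.
Proof.
move=> /(congr1 val) [cos_st sin_st].
have [k st_k] : exists k : int, (s - t) * (pi *+ 2) = k%:~R * (pi *+ 2).
  by apply: cos_eq1; rewrite mulrBl cosB cos_st sin_st -!expr2 cos2Dsin2.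
by exists k; exact: (mulIf tau_neq0 st_k).
Qed.

Lemma circle_exp_continuous : continuous circle_exp.
Proof.
apply: (@continuous_comp_initial _ _ _ set_val) => t.
have scale_cont : {for t, continuous (fun t : R => t * (pi *+ 2))}.
  by apply: continuousM => //; exact: cst_continuous.
exact: cvg_pair (continuous_comp scale_cont (@continuous_cos R _))
                (continuous_comp scale_cont (@continuous_sin R _)).
Qed.

(* Tangent half-angle substitution: (x, y) = (cos t, sin t) with
   tan (t / 2) = y / (1 + x). *)
Definition half_arg (p : R * R) : R := 2 * atan (p.2 / (1 + p.1)).

Lemma half_argK p : circle p -> 1 + p.1 != 0 ->
  cos (half_arg p) = p.1 /\ sin (half_arg p) = p.2.
Proof.
case: p => x y; rewrite /circle /half_arg /= => on_circle x_neq.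
have y2 : y ^+ 2 = 1 - x ^+ 2 by rewrite -on_circle addrC addKr.
set u := y / (1 + x); set t := atan u.
have cos_gt0 : 0 < cos t.
  by apply: cos_gt0_pihalf; rewrite atan_gtNpi2 atan_ltpi2.
have sin_t : sin t = u * cos t.
  by have := atanK u; rewrite /tan -/t => <-; rewrite divfK // gt_eqF.
have cos2 : cos t ^+ 2 = (1 + x) / 2.
  have u2 : 1 + u ^+ 2 = 2 / (1 + x) by rewrite /u expr_div_n y2; field.
  have : cos t ^+ 2 * (1 + u ^+ 2) = 1.
    by rewrite -[RHS](cos2Dsin2 t) sin_t; ring.
  by rewrite u2 => /(canRL (mulfK _)) ->; [field | rewrite mulf_neq0 ?invr_eq0].
rewrite mulr_natl mulr2n cosD sinD sin_t; split.
  have -> : cos t * cos t - u * cos t * (u * cos t) = cos t ^+ 2 * (1 - u ^+ 2).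
    by ring.
  by rewrite cos2 /u expr_div_n y2; field.
have -> : u * cos t * cos t + cos t * (u * cos t) = 2 * u * cos t ^+ 2 by ring.
by rewrite cos2 /u; field.
Qed.

Lemma half_arg_continuous p : 1 + p.1 != 0 -> {for p, continuous half_arg}.
Proof.
move=> p_neq; apply: continuousM; first exact: cst_continuous.
apply: (@continuous_comp _ _ _ (fun q : R * R => q.2 / (1 + q.1)) atan);
  last exact: continuous_atan.
apply: continuousM; first exact: snd_continuous.
apply: continuousV => //; apply: continuousD; first exact: cst_continuous.
exact: fst_continuous.
Qed.

Lemma circle_exp_half_arg p : circle p -> 1 + p.1 != 0 ->
  val (circle_exp (half_arg p / (pi *+ 2))) = p.
Proof.
move=> p_circle /(half_argK p p_circle) [cos_p sin_p].
by rewrite /= divfK ?tau_neq0 // cos_p sin_p; case: p {p_circle cos_p sin_p}.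
Qed.

Lemma circle_expD_half t : val (circle_exp (t + 2^-1)) = - val (circle_exp t).
Proof.
have half_tau : 2^-1 * (pi *+ 2) = pi :> R by rewrite mulr2n; field.
by rewrite /= mulrDl half_tau cosDpi sinDpi.
Qed.

Lemma circle_val_continuous :
  continuous (set_val : set_type (@circle R) -> R * R).
Proof. exact: initial_continuous. Qed.

Lemma near_circle_fst_neq (w : set_type (@circle R)) (c : R) :
  (val w).1 != c -> \forall y \near w, (val y).1 != c.
Proof.
move=> wc; have fst_val_cont : {for w, continuous (fun y => (set_val y).1)}.
  apply: (@continuous_comp _ _ _ set_val fst w).
    exact: circle_val_continuous.
  exact: fst_continuous.
apply: (fst_val_cont [set r | r != c]); apply: open_nbhs_nbhs.
by split; [exact: open_neq |].
Qed.

(* Away from (-1, 0) [half_arg] is a continuous branch of the angle; near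
   (-1, 0) use it at the antipode and add half a turn. *)
Lemma circle_exp_local_section (w : set_type (@circle R)) :
  exists2 theta : set_type (@circle R) -> R,
    {for w, continuous theta} & \forall y \near w, circle_exp (theta y) = y.
Proof.
have val_cont := circle_val_continuous.
have on_circle (y : set_type (@circle R)) : circle (val y) := set_mem (valP y).
have [w_eq | w_neq] := eqVneq (val w).1 (-1).
  exists (fun y => half_arg (- val y) / (pi *+ 2) + 2^-1).
    apply: continuousD; last exact: cst_continuous.
    apply: continuousM; last exact: cst_continuous.
    apply: (@continuous_comp _ _ _ (fun y : set_type (@circle R) => - set_val y)
      half_arg w).
      exact: continuousN (val_cont w).
    by apply: half_arg_continuous; rewrite /= w_eq opprK; lra.
  near=> y; apply: val_inj.
  have y_neq : (val y).1 != 1.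
    by near: y; apply: near_circle_fst_neq; rewrite w_eq; lra.
  rewrite circle_expD_half circle_exp_half_arg ?opprK //=.
    by have := on_circle y; rewrite /circle /= !sqrrN.
  by rewrite subr_eq0 eq_sym.
exists (fun y => half_arg (val y) / (pi *+ 2)).
  apply: continuousM; last exact: cst_continuous.
  apply: (@continuous_comp _ _ _ set_val half_arg w); first exact: val_cont.
  by apply: half_arg_continuous; rewrite addrC addr_eq0.
near=> y; apply: val_inj; rewrite circle_exp_half_arg // addrC addr_eq0.
by near: y; exact: near_circle_fst_neq.
Unshelve. all: by end_near.
Qed.

Lemma circle_exp_surj w : exists t, circle_exp t = w.
Proof.
have [theta _ /nbhs_singleton theta_w] := circle_exp_local_section w.
by exists (theta w).
Qed.

(* Some angle of w: only its class modulo Z is determined. *)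
Definition circle_arg (w : set_type (@circle R)) : R :=
  sval (cid (circle_exp_surj w)).

Lemma circle_argK : cancel circle_arg circle_exp.
Proof. by move=> w; rewrite /circle_arg; case: cid. Qed.

End Circle.

Section Torus.
Context {R : realType} {k : nat}.

Lemma vRD (z w : 'rV[int]_k) : vR R (z + w) = vR R z + vR R w.
Proof. by rewrite /vR map_mxD. Qed.

Lemma vRN (z : 'rV[int]_k) : vR R (- z) = - vR R z.
Proof. by rewrite /vR map_mxN. Qed.

Lemma vRZ (l : int) (z : 'rV[int]_k) : vR R (l *: z) = l%:~R *: vR R z.
Proof. by apply/matrixP => i j; rewrite !mxE intrM. Qed.

Lemma torusE_equiv : Equivalence (@torusE R k).
Proof.
split=> [s | s t [z st] | s t u [z st] [w tu]].
- by exists 0; rewrite subrr /vR map_mx0.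
- by exists (- z); rewrite vRN -st opprB.
- by exists (z + w); rewrite vRD -st -tu addrA subrK.
Qed.

Lemma tpiP (s t : 'rV[R]_k) : tpi s = tpi t <-> torusE s t.
Proof. exact: qpiP torusE_equiv s t. Qed.

Lemma tpi_surj (q : torus R k) : exists s, q = tpi s.
Proof. exact: qpi_surj. Qed.

End Torus.

Lemma kermx_corank1 {F : fieldType} {k l : nat} {A : 'M[F]_(k, l.+1)}
    {c : 'cV[F]_l.+1} :
  c != 0 -> A *m c = 0 -> \rank A = l -> (kermx c == A)%MS.
Proof.
move=> c_neq0 Ac rankA.
have A_ker : (A <= kermx c)%MS by apply/sub_kermxP.
have rank_c : \rank c = 1%N.
  by apply/eqP; rewrite eqn_leq rank_leq_col lt0n mxrank_eq0 c_neq0.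
have rank_ker : \rank (kermx c) = l by rewrite mxrank_ker rank_c subn1.
have [_] := mxrank_leqif_sup A_ker; rewrite rankA rank_ker eqxx => ker_A.
by apply/andP; split; [rewrite -ker_A | ].
Qed.

Lemma int_primitive_kernel_vector {n : nat} (B : 'M[int]_(n, n.+1)) :
  exists (c : 'cV[int]_n.+1) (v : 'rV[int]_n.+1),
    B *m c = 0 /\ (v *m c) 0 0 = 1.
Proof.
have [L _ [U U_unit [d _ defB]]] := int_Smith_normal_form B.
exists (col ord_max (invmx U)), (row ord_max U); split.
  apply/matrixP => i j.
  rewrite colE mulmxA defB mulmxK // -colE !mxE big1 // => l _.
  by rewrite mxE /= (ltn_eqF (ltn_ord l)) mulr0n mulr0.
by rewrite colE mulmxA -row_mul mulmxV // -colE !mxE eqxx.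
Qed.

Lemma mulmx_coord_continuous {R : realType} {k l : nat} (M : 'M[R]_(k, l)) j :
  continuous (fun u : 'rV[R]_k => (u *m M) 0 j).
Proof.
have -> : (fun u : 'rV[R]_k => (u *m M) 0 j) =
    (fun u => \sum_(i < k) u 0 i * M i j) by apply/funext => u; rewrite mxE.
apply: continuous_big => [|i _ u]; first exact: add_continuous.
by apply: continuousM; [exact: coord_continuous | exact: cst_continuous].
Qed.

Definition kappa {R : realType} {n : nat} (c : 'cV[int]_n.+1)
    (u : 'rV[R]_n.+1) : R :=
  (u *m intmx R c) 0 0.

Section Character.
Context {R : realType} {n : nat} {B : 'M[int]_(n, n.+1)}.
Context {c : 'cV[int]_n.+1} {v : 'rV[int]_n.+1}.
Hypotheses (Bc : B *m c = 0) (vc : (v *m c) 0 0 = 1).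
Hypothesis rankB : \rank (intmx R B) = n.
Implicit Types u w : 'rV[R]_n.+1.

Lemma kappaD u w : kappa c (u + w) = kappa c u + kappa c w.
Proof. by rewrite /kappa mulmxDl mxE. Qed.

Lemma kappaB u w : kappa c (u - w) = kappa c u - kappa c w.
Proof. by rewrite /kappa mulmxBl !mxE. Qed.

Lemma kappaZ (l : R) u : kappa c (l *: u) = l * kappa c u.
Proof. by rewrite /kappa -scalemxAl mxE. Qed.

Lemma kappa_vR (z : 'rV[int]_n.+1) : kappa c (vR R z) = ((z *m c) 0 0)%:~R.
Proof. by rewrite /kappa /vR /intmx -map_mxM mxE. Qed.

Lemma kappa_v : kappa c (vR R v) = 1.
Proof. by rewrite kappa_vR vc. Qed.

Lemma kappa_rowspace (y : 'rV[R]_n) : kappa c (y *m intmx R B) = 0.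
Proof. by rewrite /kappa -mulmxA /intmx -map_mxM Bc map_mx0 mulmx0 mxE. Qed.

Lemma kappa_eq0 u : kappa c u = 0 -> exists y, u = y *m intmx R B.
Proof.
move=> kappa_u.
have c_neq0 : intmx R c != 0.
  apply/eqP => c0; have := kappa_v; rewrite /kappa c0 mulmx0 mxE.
  by move/eqP; rewrite eq_sym oner_eq0.
have B_ker : intmx R B *m intmx R c = 0 by rewrite /intmx -map_mxM Bc map_mx0.
have /andP[ker_B _] := kermx_corank1 c_neq0 B_ker rankB.
have u_ker : (u <= kermx (intmx R c))%MS.
  by apply/sub_kermxP; apply/matrixP => i j; rewrite !ord1 [RHS]mxE.
by apply/submxP; exact: submx_trans u_ker ker_B.
Qed.

End Character.

Section QuasitoricModel.
Context {R : realType} {n m : nat} {a : 'I_m -> 'rV[R]_n} {b : 'I_m -> R}.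
Context {lam : 'I_m -> 'rV[int]_n} {B : 'M[int]_(n.-1, n)}.

Local Notation span := (spanF a b lam).
(* [Defs.] because poly.v and fingraph.v also export [polyP] and [orbitE]. *)
Local Notation point := (set_type (Defs.polyP a b)).

Lemma span0 x : span x 0.
Proof. by exists (fun=> 0); rewrite big1 // => i _; rewrite scale0r. Qed.

Lemma spanN x w : span x w -> span x (- w).
Proof.
case=> c ->; exists (fun i => - c i); rewrite -sumrN.
by apply: eq_bigr => i _; rewrite scaleNr.
Qed.

Lemma spanD x w w' : span x w -> span x w' -> span x (w + w').
Proof.
case=> c -> [c' ->]; exists (fun i => c i + c' i); rewrite -big_split.
by apply: eq_bigr => i _; rewrite scalerDl.
Qed.

Lemma span_facet x i (l : R) : x \in facet a b i -> span x (l *: vR R (lam i)).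
Proof.
move=> x_i; exists (fun j => if j == i then l else 0).
rewrite (bigD1 i) //= eqxx big1 ?addr0 // => j /andP[_ /negPf ->].
by rewrite scale0r.
Qed.

Lemma relX_equiv : Equivalence (relX (a := a) (b := b) lam).
Proof.
split.
- move=> [x q]; have [s ->] := tpi_surj q.
  by split=> //; exists s, s; split=> //; rewrite subrr; exact: span0.
- move=> p q [eq_pq [s [t [ps qt st]]]]; split=> //; exists t, s; split=> //.
  by rewrite -eq_pq -opprB; exact: spanN.
move=> p q r [eq_pq [s [t [ps qt st]]]] [eq_qr [s' [t' [qs' rt' st']]]].
split; first by rewrite eq_pq.
have [z ts'] : torusE t s' by apply/tpiP; rewrite qt qs'.
exists s, (t' + vR R z); split=> //.
  by rewrite -rt'; apply/tpiP; exists z; rewrite addrC addKr.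
have -> : s - (t' + vR R z) = (s - t) + (s' - t').
  by rewrite -ts'; apply/matrixP => i j; rewrite !mxE; ring.
by apply: spanD => //; rewrite eq_pq.
Qed.

Lemma xpi_surj (q : qtmanifold a b lam) : exists x s, q = xpi lam x s.
Proof.
by have [[x t] ->] := qpi_surj q; have [s ->] := tpi_surj t; exists x, s.
Qed.

Lemma xpi_base {x y : point} {s t : 'rV[R]_n} :
  xpi lam x s = xpi lam y t -> x = y.
Proof. by move/(qpiP relX_equiv) => [/= /val_inj]. Qed.

Lemma xpiP (x : point) (s t : 'rV[R]_n) :
  xpi lam x s = xpi lam x t <-> exists z, span (val x) (s - t + vR R z).
Proof.
rewrite /xpi (qpiP relX_equiv); split.
  case=> _ [s' [t' [/tpiP [z1 ss'] /tpiP [z2 tt'] st']]].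
  exists (z1 - z2); rewrite vRD vRN -ss' -tt'.
  by congr (span _ _): st'; apply/matrixP => i j; rewrite !mxE; ring.
case=> z st; split=> //; exists (s + vR R z), t; split=> //=.
by apply/tpiP; exists z; rewrite addrC addKr.
by rewrite addrAC.
Qed.

Lemma orbitE_equiv : Equivalence (Defs.orbitE (a := a) (b := b) (lam := lam) B).
Proof.
split.
- move=> p; have [x [s ->]] := xpi_surj p.
  by exists 0, x, s; rewrite mul0mx addr0.
- move=> p q [c [x [s [-> ->]]]]; exists (- c), x, (s + c *m intmx R B).
  by rewrite mulNmx addrK.
move=> p q r [c [x [s [-> xsc]]]] [c' [y [s' [ys' ->]]]].
have xy := xpi_base (etrans (esym xsc) ys'); subst y.
have [z scs'] := (xpiP x _ _).1 (etrans (esym xsc) ys').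
exists (c + c'), x, s; split=> //; apply/xpiP; exists (- z).
have -> : s' + c' *m intmx R B - (s + (c + c') *m intmx R B) + vR R (- z) =
    - (s + c *m intmx R B - s' + vR R z).
  by rewrite vRN mulmxDl; apply/matrixP => i j; rewrite !mxE; ring.
exact: spanN.
Qed.

Lemma relY_equiv : Equivalence (relY (a := a) (b := b) lam B).
Proof.
split.
- by move=> p; split=> //; left.
- by move=> p q [eq_pq [pq | Yp]]; split=> //; [left | right; rewrite -eq_pq].
move=> p q r [eq_pq pq] [eq_qr qr]; split; first by rewrite eq_pq.
case: pq => [-> | ]; last by right.
by case: qr => [-> | Yq]; [left | right; rewrite eq_pq].
Qed.

Lemma Ynon_facetP {x0 : 'rV[R]_n} : (forall i, dotv (a i) x0 < b i) ->
  forall x, Ynon a b lam B x <->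
    exists2 i, x \in facet a b i & ~ special_facet R lam B i.
Proof.
move=> x0_int x; split.
  case=> G [_ _ G_nonspecial Gx].
  have [i /not_implyP [G_i i_nonspecial]] :
      exists i, ~ (G `<=` facet a b i -> special_facet R lam B i).
    by apply/existsNP => G_special; apply: G_nonspecial => i; exact: G_special.
  by exists i => //; apply/mem_set; exact: G_i.
case=> i /set_mem x_i i_nonspecial; exists (facet a b i); split=> //.
- split; first by exists x.
  by exists (a i), (b i); split=> // y; case/(_ i).
- move=> facet_P; have [_ /eqP] : facet a b i x0.
    by rewrite facet_P => j; exact/ltW.
  by rewrite lt_eqF.
- by move/(_ i (@subset_refl _ _)).
Qed.

End QuasitoricModel.

Section OrbitSpace.
Context {R : realType} {n m : nat} {a : 'I_m -> 'rV[R]_n.+1} {b : 'I_m -> R}.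
Context {lam : 'I_m -> 'rV[int]_n.+1} {B : 'M[int]_(n, n.+1)}.
Context {c : 'cV[int]_n.+1} {v : 'rV[int]_n.+1}.
Hypotheses (Bc : B *m c = 0) (vc : (v *m c) 0 0 = 1).
Hypothesis rankB : \rank (intmx R B) = n.
Context {x0 : 'rV[R]_n.+1}.
Hypothesis x0_interior : forall i, dotv (a i) x0 < b i.

Local Notation point := (set_type (Defs.polyP a b)).
Local Notation OE := (Defs.orbitE (a := a) (b := b) (lam := lam) B).
Local Notation orbit := (qpi OE).
Local Notation YE := (relY (a := a) (b := b) lam B).

Lemma span_kappa0 x w :
  (forall i, x \in facet a b i -> special_facet R lam B i) ->
  spanF a b lam x w -> kappa c w = 0.
Proof.
move=> x_special [l ->]; rewrite /kappa mulmx_suml summxE big1 // => i x_i.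
have [y lam_i] := x_special i x_i.
by rewrite -scalemxAl mxE -/(kappa c _) lam_i (kappa_rowspace Bc) mulr0.
Qed.

Lemma orbit_kappa (x : point) s t :
  kappa c s = kappa c t -> orbit (xpi lam x s) = orbit (xpi lam x t).
Proof.
move=> /esym /eqP; rewrite -subr_eq0 -kappaB => /eqP.
move=> /(kappa_eq0 Bc vc rankB) [y ts].
apply/(qpiP orbitE_equiv); exists y, x, s; split=> //.
by rewrite -ts subrKC.
Qed.

Lemma orbit_Ynon (x : point) s t :
  Ynon a b lam B (val x) -> orbit (xpi lam x s) = orbit (xpi lam x t).
Proof.
case/(Ynon_facetP x0_interior) => i x_i i_nonspecial.
have kappa_i : kappa c (vR R (lam i)) != 0.
  apply/eqP => /(kappa_eq0 Bc vc rankB) [y lam_y].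
  by apply: i_nonspecial; exists y.
(* Moving along the circle lambda(F_i), which fixes x, adjusts kappa at will. *)
pose l := kappa c (t - s) / kappa c (vR R (lam i)).
have -> : orbit (xpi lam x s) = orbit (xpi lam x (t - l *: vR R (lam i))).
  by apply: orbit_kappa; rewrite kappaB kappaZ /l divfK // kappaB; ring.
congr orbit; apply/xpiP; exists 0.
rewrite /vR map_mx0 addr0 addrAC subrr add0r -scaleNr; exact: span_facet.
Qed.

Definition kappa_circle (s : 'rV[R]_n.+1) : set_type (@circle R) :=
  circle_exp (kappa c s).

Lemma kappa_circle_continuous : continuous kappa_circle.
Proof.
have kappa_cont : continuous (kappa c) := mulmx_coord_continuous (intmx R c) 0.
by move=> s; exact: continuous_comp (kappa_cont s) (circle_exp_continuous _).
Qed.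

Lemma kappa_circle_lattice s t : torusE s t -> kappa_circle s = kappa_circle t.
Proof.
case=> z st; rewrite /kappa_circle -[s](subrK t) kappaD st kappa_vR.
by rewrite addrC circle_expDz.
Qed.

Definition torus_circle : torus R n.+1 -> set_type (@circle R) :=
  qlift kappa_circle.

Definition to_pinched_PT (p : PT a b) : pinched a b lam B :=
  qpi YE (p.1, torus_circle p.2).

Lemma to_pinched_PT_compat p q :
  relX lam p q -> to_pinched_PT p = to_pinched_PT q.
Proof.
case: p q => [x _] [y _] [/= /val_inj <- [s [t [<- <- st]]]].
rewrite /to_pinched_PT /torus_circle /=.
rewrite !(qliftE torusE_equiv kappa_circle_lattice).
apply/(qpiP relY_equiv); split=> //=.
have [Y_x | nY_x] := pselect (Ynon a b lam B (val x)); [by right | left].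
rewrite /kappa_circle; congr circle_exp.
apply/eqP; rewrite -subr_eq0 -kappaB; apply/eqP.
apply: (span_kappa0 _ _ _ st) => i x_i; apply/not_notP => i_nonspecial.
by apply: nY_x; apply/(Ynon_facetP x0_interior); exists i.
Qed.

Lemma to_pinched_PT_continuous : continuous to_pinched_PT.
Proof.
have torus_circle_cont : continuous torus_circle.
  apply: (qlift_continuous torusE_equiv kappa_circle_lattice).
  exact: kappa_circle_continuous.
move=> p; exact: continuous_comp (continuous_pair_map torus_circle_cont p)
                                 (qpi_continuous _).
Qed.

Definition qt_to_pinched : qtmanifold a b lam -> pinched a b lam B :=
  qlift to_pinched_PT.

Lemma qt_to_pinchedE x s :
  qt_to_pinched (xpi lam x s) = qpi YE (x, kappa_circle s).
Proof.
rewrite /qt_to_pinched (qliftE relX_equiv to_pinched_PT_compat).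
rewrite /to_pinched_PT /torus_circle.
by rewrite (qliftE torusE_equiv kappa_circle_lattice).
Qed.

Lemma qt_to_pinched_compat p q : OE p q -> qt_to_pinched p = qt_to_pinched q.
Proof.
case=> y [x [s [-> ->]]]; rewrite !qt_to_pinchedE /kappa_circle.
by rewrite kappaD kappa_rowspace ?addr0.
Qed.

Definition to_pinched : orbit_space a b lam B -> pinched a b lam B :=
  qlift qt_to_pinched.

Lemma to_pinchedE x s :
  to_pinched (orbit (xpi lam x s)) = qpi YE (x, kappa_circle s).
Proof.
rewrite /to_pinched (qliftE orbitE_equiv qt_to_pinched_compat).
exact: qt_to_pinchedE.
Qed.

Lemma to_pinched_continuous : continuous to_pinched.
Proof.
apply: (qlift_continuous orbitE_equiv qt_to_pinched_compat).
apply: (qlift_continuous relX_equiv to_pinched_PT_compat).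
exact: to_pinched_PT_continuous.
Qed.

Lemma tpi_circle_exp {t t' : R} :
  circle_exp t = circle_exp t' -> tpi (t *: vR R v) = tpi (t' *: vR R v).
Proof.
move/circle_exp_inj => [k tt']; apply/tpiP; exists (k *: v).
by rewrite vRZ -scalerBl tt'.
Qed.

Definition circle_torus (w : set_type (@circle R)) : torus R n.+1 :=
  tpi (circle_arg w *: vR R v).

Lemma circle_torus_continuous : continuous circle_torus.
Proof.
move=> w; have [theta theta_cont theta_sect] := circle_exp_local_section w.
have near_theta : \forall y \near w, tpi (theta y *: vR R v) = circle_torus y.
  by near=> y; apply: tpi_circle_exp; rewrite circle_argK; near: y.
rewrite /continuous_at -(nbhs_singleton near_theta).
apply: cvg_trans (near_eq_cvg near_theta) _.
have scale_cont : {for w, continuous (fun y => theta y *: vR R v)}.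
  exact: continuousZr_tmp theta_cont.
exact: continuous_comp scale_cont (qpi_continuous _).
Unshelve. all: by end_near.
Qed.

Definition of_pinched_PS (p : PS a b) : orbit_space a b lam B :=
  orbit (qpi (relX lam) (p.1, circle_torus p.2)).

Lemma of_pinched_PS_continuous : continuous of_pinched_PS.
Proof.
move=> p; have to_qt_cont := continuous_comp
  (continuous_pair_map circle_torus_continuous p)
  (qpi_continuous (E := relX lam) _).
exact: continuous_comp to_qt_cont (qpi_continuous _).
Qed.

Lemma of_pinched_PS_compat p q : YE p q -> of_pinched_PS p = of_pinched_PS q.
Proof.
case: p q => [x w] [y w'] [/= /val_inj <- [<- // | Y_x]].
exact: orbit_Ynon.
Qed.

Definition of_pinched : pinched a b lam B -> orbit_space a b lam B :=
  qlift of_pinched_PS.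

Lemma of_pinchedE x w :
  of_pinched (qpi YE (x, w)) = orbit (xpi lam x (circle_arg w *: vR R v)).
Proof. exact: (qliftE relY_equiv of_pinched_PS_compat). Qed.

Lemma of_pinched_continuous : continuous of_pinched.
Proof.
apply: (qlift_continuous relY_equiv of_pinched_PS_compat).
exact: of_pinched_PS_continuous.
Qed.

Lemma to_pinchedK : cancel to_pinched of_pinched.
Proof.
move=> q; have [p ->] := qpi_surj q; have [x [s ->]] := xpi_surj p.
rewrite to_pinchedE of_pinchedE /xpi (tpi_circle_exp (circle_argK _)).
by apply: orbit_kappa; rewrite kappaZ kappa_v // mulr1.
Qed.

Lemma of_pinchedK : cancel of_pinched to_pinched.
Proof.
move=> y; have [[x w] ->] := qpi_surj y.
rewrite of_pinchedE to_pinchedE /kappa_circle.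
by rewrite kappaZ kappa_v // mulr1 circle_argK.
Qed.

Lemma orbit_space_homeomorphic_pinched :
  homeomorphic (orbit_space a b lam B) (pinched a b lam B).
Proof.
exists to_pinched, of_pinched; split.
- exact: to_pinched_continuous.
- exact: of_pinched_continuous.
- exact: to_pinchedK.
- exact: of_pinchedK.
Qed.

End OrbitSpace.

Theorem lemma2p6 (R : realType) (n m : nat)
  (a : 'I_m -> 'rV[R]_n) (b : 'I_m -> R)
  (lam : 'I_m -> 'rV[int]_n) (B : 'M[int]_(n.-1, n)) :
  (0 < n)%N ->
  simple_polytope a b ->
  char_fun a b lam ->
  \rank (intmx R B) = n.-1 ->
  connected_stabilizers a b lam B ->
  homeomorphic (orbit_space a b lam B) (pinched a b lam B).
Proof.
(* In this model the fibre of Q over x is T^n modulo the connected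
   group T(F(x)) T^{n-1}. *)
case: n a b lam B => [//|n] a b lam B _ [_ [x0 x0_interior] _ _] _ rankB _.
have [c [v [Bc vc]]] := @int_primitive_kernel_vector n B.
exact: (orbit_space_homeomorphic_pinched (lam := lam) Bc vc rankB x0_interior).
Qed.
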